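(* Let $\langle H,M,T\rangle$ be an abduction instance, let $X$ be the set of variables of $T$, let $\Pi(H\cup X)=\{\gamma_1,\ldots,\gamma_k\}$, and let $C=\{c_1,\ldots,c_k\}$, $D=\{d_1,\ldots,d_k\}$ be sets of fresh variables. Define $f(\langle H,M,T\rangle)=\langle H',M',T'\rangle$ where $H'=H\cup C\cup D$, $M'=M\cup\{c_i\mid \gamma_i\in T\}\cup\{d_i\mid\gamma_i\notin T\}$, and $T'=\{\neg c_i\vee\neg d_i\mid \gamma_i\in\Pi(H\cup X)\}\cup\{c_i\rightarrow\gamma_i\mid\gamma_i\in\Pi(H\cup X)\}$. Then \[SOL(f(\langle H,M,T\rangle))=\{S\cup\{c_i\mid\gamma_i\in T\}\cup\{d_i\mid\gamma_i\notin T\}\mid S\in SOL(\langle H,M,T\rangle)\}.\]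
   Context: An abduction instance is a triple $\langle H,M,T\rangle$ where $T$ is a propositional theory in 3CNF (so $T\subseteq\Pi(V)$ for $V$ the variables of $T$), $H$ is a set of propositional variables and $M$ a set of propositional variables. $SOL(\langle H,M,T\rangle)=\{H'\subseteq H\mid H'\cup T\text{ consistent and } H'\cup T\models M\}$. For a set of variables $Y$, $\Pi(Y)$ denotes the set of all distinct clauses of three literals over $Y$. *)

From mathcomp Require Import all_boot.
From mathcomp Require Import finmap.
Set Implicit Arguments. Unset Strict Implicit. Unset Printing Implicit Defensive.
Local Open Scope fset_scope.

(* A literal is a pair (b, x): (true, x) is x, (false, x) is ~x. *)
Definition literal (V : choiceType) := (bool * V)%type.
Definition clause (V : choiceType) := {fset literal V}.
Definition theory (V : choiceType) := {fset clause V}.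

Definition sat_lit (V : choiceType) (a : V -> bool) (l : literal V) : bool :=
  a l.2 == l.1.
Definition sat_clause (V : choiceType) (a : V -> bool) (g : clause V) : bool :=
  has (sat_lit a) g.
Definition sat_theory (V : choiceType) (a : V -> bool) (T : theory V) : bool :=
  all (sat_clause a) T.

Definition consistent (V : choiceType) (S : {fset V}) (T : theory V) : Prop :=
  exists a : V -> bool, sat_theory a T /\ (forall x, x \in S -> a x).

Definition entails (V : choiceType) (S : {fset V}) (T : theory V) (M : {fset V}) : Prop :=
  forall a : V -> bool, sat_theory a T -> (forall x, x \in S -> a x) ->
    forall m, m \in M -> a m.

Definition SOL (V : choiceType) (H M : {fset V}) (T : theory V) (S : {fset V}) : Prop :=
  S `<=` H /\ consistent S T /\ entails S T M.

Definition vars_clause (V : choiceType) (g : clause V) : {fset V} :=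
  [fset l.2 | l in g].
Definition vars (V : choiceType) (T : theory V) : {fset V} :=
  \bigcup_(g <- T) vars_clause g.

Definition lits (V : choiceType) (Y : {fset V}) : {fset literal V} :=
  [fset (true, x) | x in Y] `|` [fset (false, x) | x in Y].
Definition Pi (V : choiceType) (Y : {fset V}) : {fset clause V} :=
  [fset g in fpowerset (lits Y) | #|` g| == 3].

Definition is3CNF (V : choiceType) (T : theory V) : Prop :=
  forall g, g \in T -> #|` g| = 3.

(* The reduction f, given the fresh-variable maps c, d : gamma_i |-> c_i, d_i *)
Definition PiHX (V : choiceType) (H : {fset V}) (T : theory V) : {fset clause V} :=
  Pi (H `|` vars T).
Definition CT (V : choiceType) (H : {fset V}) (T : theory V) (c : clause V -> V) : {fset V} :=
  [fset c g | g in PiHX H T & g \in T].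
Definition DT (V : choiceType) (H : {fset V}) (T : theory V) (d : clause V -> V) : {fset V} :=
  [fset d g | g in PiHX H T & g \notin T].
Definition fH (V : choiceType) (H : {fset V}) (T : theory V) (c d : clause V -> V) : {fset V} :=
  H `|` [fset c g | g in PiHX H T] `|` [fset d g | g in PiHX H T].
Definition fM (V : choiceType) (H M : {fset V}) (T : theory V) (c d : clause V -> V) : {fset V} :=
  M `|` CT H T c `|` DT H T d.
(* clauses  ~c_i \/ ~d_i  and  c_i -> gamma_i  (i.e. ~c_i \/ gamma_i) *)
Definition fT (V : choiceType) (H : {fset V}) (T : theory V) (c d : clause V -> V) : theory V :=
  [fset [fset (false, c g); (false, d g)] | g in PiHX H T]
  `|` [fset (false, c g) |` g | g in PiHX H T].

Definition fresh_maps (V : choiceType) (H M : {fset V}) (T : theory V)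
  (c d : clause V -> V) : Prop :=
  let P := PiHX H T in
  {in P &, injective c} /\ {in P &, injective d} /\
  (forall g g', g \in P -> g' \in P -> c g != d g') /\
  (forall g, g \in P -> c g \notin H `|` vars T `|` M) /\
  (forall g, g \in P -> d g \notin H `|` vars T `|` M).

From mathcomp Require Import all_boot.
From mathcomp Require Import finmap.
Set Implicit Arguments. Unset Strict Implicit. Unset Printing Implicit Defensive.
Local Open Scope fset_scope.

(* The fresh variables c_g, d_g occur only negatively in T', so switching one of
   them off preserves every model of T'.  Hence a solution S' of the reduced
   instance contains every c_g, d_g that M' demands, and the clauses
   ~c_g \/ ~d_g leave room for no other fresh variable: S' = S u C_T u D_T with
   S = S' n H.  For sets of this shape, the clauses c_g -> g make T a consequence
   of T' and C_T, while any model of T extends to a model of T' by giving c_g and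
   d_g their intended values (g in T, resp. g notin T); this transfers both
   consistency and entailment between the two instances. *)

Section Propositional.
Variable V : choiceType.
Implicit Types (a : V -> bool) (l : literal V) (K : clause V) (U : theory V)
  (S N Y : {fset V}).

Lemma sat_clauseP a K :
  reflect (exists2 l, l \in K & sat_lit a l) (sat_clause a K).
Proof. exact: hasP. Qed.

Lemma sat_theoryP a U :
  reflect {in U, forall K, sat_clause a K} (sat_theory a U).
Proof. exact: allP. Qed.

Lemma sat_clause1 a l : sat_clause a [fset l] = sat_lit a l.
Proof.
by apply/sat_clauseP/idP => [[l' /fset1P -> //]|]; exists l; rewrite ?in_fset1.
Qed.

Lemma sat_clauseU a K1 K2 :
  sat_clause a (K1 `|` K2) = sat_clause a K1 || sat_clause a K2.
Proof.
apply/sat_clauseP/orP => [[l]|[] /sat_clauseP [l lK sl]].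
- by rewrite in_fsetU => /orP [] lK sl; [left | right]; apply/sat_clauseP; exists l.
- by exists l; rewrite // in_fsetU lK.
- by exists l; rewrite // in_fsetU lK orbT.
Qed.

Lemma eq_sat_clause a a' K :
  {in vars_clause K, a =1 a'} -> sat_clause a K = sat_clause a' K.
Proof.
move=> eq_aa'; apply: eq_in_has => l lK.
by rewrite /sat_lit eq_aa' //; apply/imfsetP; exists l.
Qed.

Lemma vars_clause_sub U K : K \in U -> vars_clause K `<=` vars U.
Proof. by move=> KU; apply: bigfcup_sup. Qed.

Lemma mem_lits Y l : (l \in lits Y) = (l.2 \in Y).
Proof.
case: l => [b x] /=; rewrite in_fsetU.
apply/orP/idP => [[] /imfsetP [y yY [_ ->]] //|xY].
by case: b; [left | right]; apply/imfsetP; exists x.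
Qed.

Lemma mem_Pi_var Y K l : K \in Pi Y -> l \in K -> l.2 \in Y.
Proof.
rewrite !inE fpowersetE => /andP [/fsubsetP sub_lits _] lK.
by rewrite -mem_lits sub_lits.
Qed.

Lemma is3CNF_sub_Pi U Y : is3CNF U -> vars U `<=` Y -> U `<=` Pi Y.
Proof.
move=> U3 /fsubsetP varsY; apply/fsubsetP => K KU.
rewrite !inE fpowersetE U3 // eqxx andbT; apply/fsubsetP => l lK.
rewrite mem_lits varsY //; apply: (fsubsetP (vars_clause_sub KU)).
by apply/imfsetP; exists l.
Qed.

Definition only_negative U v := {in U, forall K, (true, v) \notin K}.

Lemma sat_theory_set_false a U v :
  only_negative U v -> sat_theory a U ->
  sat_theory (fun x => (x != v) && a x) U.
Proof.
move=> negv /sat_theoryP satU; apply/sat_theoryP => K KU.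
have /sat_clauseP [[b x] lK sl] := satU K KU.
apply/sat_clauseP; exists (b, x) => //; rewrite /sat_lit /=.
have [xv | _] := eqVneq x v; last exact: sl.
by case: b lK sl => // lK; rewrite xv (negbTE (negv K KU)) in lK.
Qed.

Lemma entails_only_negative S U N v :
  consistent S U -> entails S U N -> v \in N -> only_negative U v -> v \in S.
Proof.
move=> [a [satU aS]] ent vN negv; apply/negPn/negP => vS.
suff : (v != v) && a v by rewrite eqxx.
apply: (ent _ (sat_theory_set_false negv satU)) vN => x xS.
by rewrite aS // andbT; apply: contraNneq vS => <-.
Qed.

End Propositional.

Section Reduction.
Variables (V : choiceType) (H M : {fset V}) (T : theory V) (c d : clause V -> V).
Implicit Types (a : V -> bool) (g : clause V) (S : {fset V}).

Local Notation P := (PiHX H T).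
Local Notation CT := (CT H T c).
Local Notation DT := (DT H T d).
Local Notation fH := (fH H T c d).
Local Notation fM := (fM H M T c d).
Local Notation fT := (fT H T c d).

Lemma sat_fTP a :
  reflect {in P, forall g, ~~ (a (c g) && a (d g)) && (a (c g) ==> sat_clause a g)}
          (sat_theory a fT).
Proof.
apply: (iffP (sat_theoryP _ _)) => [satf g gP | satP K].
  have /satf : [fset (false, c g); (false, d g)] \in fT.
    by rewrite /fT in_fsetU; apply/orP; left; apply/imfsetP; exists g.
  have /satf : (false, c g) |` g \in fT.
    by rewrite /fT in_fsetU; apply/orP; right; apply/imfsetP; exists g.
  rewrite !sat_clauseU !sat_clause1 /sat_lit /= !eqbF_neg.
  by rewrite negb_and implybE => -> ->.
move=> /fsetUP [] /imfsetP [g gP ->]; have /andP [nand imp] := satP g gP;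
  rewrite ?sat_clauseU !sat_clause1 /sat_lit /= !eqbF_neg -?negb_and //.
by rewrite -implybE.
Qed.

Lemma only_negative_fT v : v \notin H `|` vars T -> only_negative fT v.
Proof.
move=> vHX K; rewrite /fT in_fsetU => /orP [] /imfsetP [g gP ->].
  by rewrite in_fset2.
rewrite in_fset1U /=; apply: contra vHX => vg.
exact: (mem_Pi_var gP vg).
Qed.

Hypothesis fresh : fresh_maps H M T c d.

Lemma mem_c_CT g : g \in P -> (c g \in CT) = (g \in T).
Proof.
have [c_inj _] := fresh; move=> gP.
apply/imfsetP/idP => [[g' /andP [g'P g'T] /c_inj ->] // | gT].
by exists g; rewrite // inE gP.
Qed.

Lemma mem_d_DT g : g \in P -> (d g \in DT) = (g \notin T).
Proof.
have [_ [d_inj _]] := fresh; move=> gP.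
apply/imfsetP/idP => [[g' /andP [g'P g'T] /d_inj ->] // | gT].
by exists g; rewrite // inE gP.
Qed.

Lemma c_notin_DT g : g \in P -> c g \notin DT.
Proof.
have [_ [_ [c_neq_d _]]] := fresh; move=> gP.
by apply/imfsetP => -[g' /andP [g'P _] /eqP]; rewrite (negbTE (c_neq_d _ _ gP g'P)).
Qed.

Lemma d_notin_CT g : g \in P -> d g \notin CT.
Proof.
have [_ [_ [c_neq_d _]]] := fresh; move=> gP.
by apply/imfsetP => -[g' /andP [g'P _] /eqP]; rewrite eq_sym (negbTE (c_neq_d _ _ g'P gP)).
Qed.

Lemma fresh_CTDT x : x \in CT `|` DT -> x \notin H `|` vars T `|` M.
Proof.
have [_ [_ [_ [c_fresh d_fresh]]]] := fresh.
by rewrite in_fsetU => /orP [] /imfsetP [g /andP [gP _] ->]; [apply: c_fresh | apply: d_fresh].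
Qed.

Definition extend a x := if x \in H `|` vars T `|` M then a x else x \in CT `|` DT.

Lemma extend_old a x : x \in H `|` vars T `|` M -> extend a x = a x.
Proof. by rewrite /extend => ->. Qed.

Lemma extend_CTDT a x : x \in CT `|` DT -> extend a x.
Proof. by move=> xCD; rewrite /extend (negbTE (fresh_CTDT xCD)). Qed.

Lemma extend_c a g : g \in P -> extend a (c g) = (g \in T).
Proof.
have [_ [_ [_ [c_fresh _]]]] := fresh; move=> gP.
rewrite /extend (negbTE (c_fresh g gP)) in_fsetU mem_c_CT //.
by rewrite (negbTE (c_notin_DT gP)) orbF.
Qed.

Lemma extend_d a g : g \in P -> extend a (d g) = (g \notin T).
Proof.
have [_ [_ [_ [_ d_fresh]]]] := fresh; move=> gP.
by rewrite /extend (negbTE (d_fresh g gP)) in_fsetU mem_d_DT // (negbTE (d_notin_CT gP)).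
Qed.

Lemma extend_on a S :
  S `<=` H -> {in S, forall x, a x} -> {in S `|` CT `|` DT, forall x, extend a x}.
Proof.
move=> /fsubsetP SH aS x; rewrite -fsetUA in_fsetU => /orP [xS | /extend_CTDT //].
by rewrite extend_old ?aS // !in_fsetU SH.
Qed.

Lemma sat_extend a : sat_theory a T -> sat_theory (extend a) fT.
Proof.
move=> /sat_theoryP satT; apply/sat_fTP => g gP.
rewrite extend_c // extend_d //; case: (boolP (g \in T)) => //= gT.
rewrite (@eq_sat_clause _ _ a) ?satT // => x xg.
by rewrite extend_old // !in_fsetU (fsubsetP (vars_clause_sub gT)) ?orbT.
Qed.

Lemma SOL_f_forced S' : SOL fH fM fT S' -> CT `|` DT `<=` S'.
Proof.
move=> [_ [cons ent]]; apply/fsubsetP => x xCD.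
apply: (entails_only_negative cons ent).
  by rewrite /fM -fsetUA in_fsetU xCD orbT.
apply: only_negative_fT; apply: contra (fresh_CTDT xCD).
exact: (fsubsetP (fsubsetUl _ _)).
Qed.

Lemma SOL_f_shape S' : SOL fH fM fT S' -> S' = (S' `&` H) `|` CT `|` DT.
Proof.
move=> solS'; have CD_S' := SOL_f_forced solS'.
have [S'fH [[a [satf aS']] _]] := solS'.
have not_cd g : g \in P -> c g \in S' -> d g \in S' -> False.
  move=> gP /aS' acg /aS' adg.
  by have /andP [] := (sat_fTP _ satf) g gP; rewrite acg adg.
have c_S'_T g : g \in P -> c g \in S' -> g \in T.
  move=> gP cgS'; apply/negPn/negP => gT; apply: (not_cd g gP cgS').
  by apply: (fsubsetP CD_S'); rewrite in_fsetU mem_d_DT ?gT ?orbT.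
have d_S'_T g : g \in P -> d g \in S' -> g \notin T.
  move=> gP dgS'; apply/negP => gT; apply: (not_cd g gP) dgS'.
  by apply: (fsubsetP CD_S'); rewrite in_fsetU mem_c_CT ?gT.
have S'_sub : S' `<=` H `|` (CT `|` DT).
  apply/fsubsetP => x xS'; have xfH := fsubsetP S'fH x xS'.
  move: xfH xS'; rewrite !in_fsetU.
  case/orP => [/orP [-> // | /imfsetP [g gP ->] /(c_S'_T g gP) gT]
              | /imfsetP [g gP ->] /(d_S'_T g gP) gT].
    by rewrite mem_c_CT ?gT ?orbT.
  by rewrite mem_d_DT ?gT ?orbT.
apply/fsetP => x; rewrite -fsetUA !in_fsetU in_fsetI; apply/idP/idP => [xS' | ].
  by move: (fsubsetP S'_sub x xS'); rewrite !in_fsetU xS' => /orP [-> | ->]; rewrite ?orbT.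
by case/orP => [/andP [] // | xCD]; apply: (fsubsetP CD_S'); rewrite in_fsetU.
Qed.

Hypothesis T3 : is3CNF T.

Lemma T_sub_P : T `<=` P.
Proof. by apply: is3CNF_sub_Pi T3 _; apply: fsubsetUr. Qed.

Lemma sat_T_of_fT a : sat_theory a fT -> {in CT, forall x, a x} -> sat_theory a T.
Proof.
move=> /sat_fTP satf aCT; apply/sat_theoryP => g gT.
have gP := fsubsetP T_sub_P g gT.
have /andP [_ /implyP] := satf g gP; apply; apply: aCT.
by rewrite mem_c_CT.
Qed.

Lemma consistent_fE S :
  S `<=` H -> consistent S T <-> consistent (S `|` CT `|` DT) fT.
Proof.
move=> SH; split=> [[a [satT aS]] | [a [satf aS']]].
  by exists (extend a); split; [apply: sat_extend | apply: extend_on].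
exists a; split=> [|x xS]; last by apply: aS'; rewrite !in_fsetU xS.
by apply: sat_T_of_fT => // x xCT; apply: aS'; rewrite !in_fsetU xCT orbT.
Qed.

Lemma entails_fE S :
  S `<=` H -> entails S T M <-> entails (S `|` CT `|` DT) fT fM.
Proof.
move=> SH; split=> [ent a satf aS' m | ent a satT aS m mM].
  rewrite /fM -fsetUA in_fsetU => /orP [mM | mCD]; last first.
    by apply: aS'; rewrite -fsetUA in_fsetU mCD orbT.
  apply: ent mM => [|x xS]; last by apply: aS'; rewrite !in_fsetU xS.
  by apply: sat_T_of_fT => // x xCT; apply: aS'; rewrite !in_fsetU xCT orbT.
have Mm : m \in H `|` vars T `|` M by rewrite in_fsetU mM orbT.
rewrite -(extend_old a Mm); apply: ent (sat_extend satT) (extend_on SH aS) _ _.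
by rewrite !in_fsetU mM.
Qed.

Lemma SOL_fE S : S `<=` H -> SOL H M T S <-> SOL fH fM fT (S `|` CT `|` DT).
Proof.
move=> SH; have sub_fH : S `|` CT `|` DT `<=` fH.
  apply: fsetUSS; first apply: fsetUSS SH _.
    by apply/fsubsetP => _ /imfsetP [g /andP [gP _] ->]; apply: in_imfset.
  by apply/fsubsetP => _ /imfsetP [g /andP [gP _] ->]; apply: in_imfset.
split=> [[_ [cons ent]] | [_ [cons ent]]].
  by split; last split; [| apply/consistent_fE | apply/entails_fE].
by split; last split; [| apply/consistent_fE | apply/entails_fE].
Qed.

End Reduction.

Theorem lemma1 (V : choiceType) (H M : {fset V}) (T : theory V)
  (c d : clause V -> V) :
  is3CNF T ->
  fresh_maps H M T c d ->
  forall S' : {fset V},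
    SOL (fH H T c d) (fM H M T c d) (fT H T c d) S' <->
    exists S : {fset V}, SOL H M T S /\ S' = S `|` CT H T c `|` DT H T d.
Proof.
move=> T3 fresh S'; split=> [solS' | [S [solS ->]]].
  have eS' := SOL_f_shape fresh solS'.
  exists (S' `&` H); split=> //.
  by apply/(SOL_fE fresh T3 (fsubsetIr _ _)); rewrite -eS'.
by apply/(SOL_fE fresh T3) => //; case: solS.
Qed.
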